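(* Let $\mathbf{f}:(\mathbf{\Delta},\mathbf{w})\to\mathbf{\Sigma}$ be a maximal branched cover of cone complexes. Then $\mathbf{f}$ is unramified along every maximal cone of $\Delta$.
   Context: A cone complex $\mathbf{\Delta}$ is a topological space $|\Delta|$ with a finite collection $\Delta$ of closed subspaces (cones) and, for each $\sigma\in\Delta$, a finitely generated group $M_\sigma$ of continuous real functions on $\sigma$, such that, with $N_\sigma=\mathrm{Hom}(M_\sigma,\mathbb{Z})$: (i) $x\mapsto[u\mapsto u(x)]$ maps $\sigma$ homeomorphically onto a rational convex polyhedral cone in $N_\sigma\otimes\mathbb{R}$; (ii) the preimage of each face of that cone is some $\tau\in\Delta$ (a face, $\tau\preceq\sigma$) with $M_\tau=\{u|_\tau\}$; (iii) $|\Delta|$ is the disjoint union of the relative interiors of the cones. It is connected iff there is a unique minimal cone $L_\Delta$. A morphism is a continuous map sending each cone into some cone $\sigma$ with pullback of $M_\sigma$ contained in the integral functions of the source cone; the relative interior of $\sigma'$ goes into that of a unique cone $f(\sigma')$. A weight $\mathbf{w}:|\Delta|\to\mathbb{Z}_{>0}$ is constant on the relative interior of each cone $\tau$, with value $w(\tau)$. $\mathrm{Tr}_g(w)(x)=\sum_{g(y)=x}w(y)$. A branched cover $\mathbf{f}:(\mathbf{\Delta},\mathbf{w})\to\mathbf{\Sigma}$ (both connected) is a morphism mapping each cone $\sigma$ isomorphically onto $f(\sigma)$ such that for each connected open $U\subset|\Sigma|$ and each connected component $V$ of $\mathbf{f}^{-1}(U)$, $\mathrm{Tr}_{\mathbf{f}|_V}(\mathbf{w})$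 is constant on $U$; its degree $d$ is $\mathrm{Tr}_{\mathbf{f}}(\mathbf{w})$. It is ramified along a cone $\tau\ne L_\Delta$ if $w(\tau)>1$. Isomorphism of branched covers: an isomorphism $\mathbf{g}$ of cone complexes with $\mathbf{f}'=\mathbf{f}\circ\mathbf{g}$, $\mathbf{g}^*\mathbf{w}=\mathbf{w}'$. For degree $d$ branched covers of $\mathbf{\Sigma}$, $\mathbf{f}'\ge\mathbf{f}$ if there is a morphism $\mathbf{g}:\mathbf{\Delta}'\to\mathbf{\Delta}$ with $\mathbf{f}'=\mathbf{f}\circ\mathbf{g}$ and $\mathrm{Tr}_{\mathbf{g}}(\mathbf{w}')=\mathbf{w}$; $\mathbf{f}$ is maximal if it is maximal in this partial order on isomorphism classes of degree $d$ branched covers of $\mathbf{\Sigma}$. A maximal cone of $\Delta$ is one that is not a proper face of another cone. *)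

From mathcomp Require Import all_boot all_algebra.
From mathcomp Require Import boolp classical_sets functions cardinality fsbigop
  reals topology.
From mathcomp Require Import Rstruct Rstruct_topology.
Import GRing.Theory Num.Theory.

Set Implicit Arguments.
Unset Strict Implicit.
Unset Printing Implicit Defensive.

Local Open Scope classical_set_scope.
Local Open Scope ring_scope.

Notation RR := Rdefinitions.R.

Section ConeDefs.
Variable T : topologicalType.

(* Functions on a cone sigma are encoded as functions T -> RR vanishing
   outside sigma; [restr A u] is the restriction of u to A (extended by 0). *)
Definition restr (A : set T) (u : T -> RR) : T -> RR :=
  fun x => if `[< A x >] then u x else 0.

Definition zspan (n : nat) (g : 'I_n -> T -> RR) : set (T -> RR) :=
  [set u | exists k : 'I_n -> int,
     u = fun x => \sum_(i < n) (k i)%:~R * g i x].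

Definition fg_function_group (sigma : set T) (M : set (T -> RR)) : Prop :=
  (exists (n : nat) (g : 'I_n -> T -> RR), M = zspan g) /\
  (forall u, M u -> {within sigma, continuous u}) /\
  (forall u, M u -> forall x, ~ sigma x -> u x = 0).

(* Condition (i): x |-> [u |-> u x] maps sigma homeomorphically onto a
   rational convex polyhedral cone in N_sigma (x) R = Hom(M_sigma, R),
   i.e. the cone generated by finitely many n_j in N_sigma = Hom(M_sigma, Z). *)
Definition eval_is_rational_cone (sigma : set T) (M : set (T -> RR)) : Prop :=
  (forall x y, sigma x -> sigma y -> (forall u, M u -> u x = u y) -> x = y) /\
  (* image = rational polyhedral cone generated by lattice points n_j *)
  (exists (k : nat) (nv : 'I_k -> (T -> RR) -> int),
     (forall j u v, M u -> M v -> nv j (fun x => u x + v x) = nv j u + nv j v) /\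
     (forall x, sigma x -> exists lam : 'I_k -> RR, (forall j, 0 <= lam j) /\
        forall u, M u -> u x = \sum_(j < k) lam j * (nv j u)%:~R) /\
     (forall lam : 'I_k -> RR, (forall j, 0 <= lam j) ->
        exists x, sigma x /\
        forall u, M u -> u x = \sum_(j < k) lam j * (nv j u)%:~R)) /\
  (* the inverse is continuous: the topology of sigma is the one induced
     by the functions in M (the evaluation map itself is continuous since
     the u are) *)
  (forall x U, sigma x -> nbhs x U ->
     exists (m : nat) (u : 'I_m -> T -> RR) (e : RR), 0 < e /\
       (forall i, M (u i)) /\
       forall y, sigma y -> (forall i, `|u i y - u i x| < e) -> U y).

(* Preimages in sigma of the faces of the cone: a face is the intersection of
   the cone with the kernel of a linear functional l on Hom(M,R) which is
   nonnegative on the cone; such l are phi |-> sum_i c_i phi(u_i), c_i real,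
   u_i in M. *)
Definition cone_face (sigma : set T) (M : set (T -> RR)) (F : set T) : Prop :=
  exists (k : nat) (c : 'I_k -> RR) (u : 'I_k -> T -> RR),
    (forall i, M (u i)) /\
    (forall x, sigma x -> 0 <= \sum_(i < k) c i * u i x) /\
    F = [set x | sigma x /\ \sum_(i < k) c i * u i x = 0].

Definition relint (sigma : set T) (M : set (T -> RR)) : set T :=
  [set x | sigma x /\ forall F, cone_face sigma M F -> F x -> F = sigma].

Definition is_cone_complex (D : set (set T)) (M : set T -> set (T -> RR)) :
    Prop :=
  finite_set D /\
  (forall sigma, D sigma -> closed sigma) /\
  (forall sigma, D sigma -> fg_function_group sigma (M sigma)) /\
  (forall sigma, D sigma -> eval_is_rational_cone sigma (M sigma)) /\
  (forall sigma F, D sigma -> cone_face sigma (M sigma) F ->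
     D F /\ M F = [set restr F u | u in M sigma]) /\
  (forall x, exists! sigma, D sigma /\ relint sigma (M sigma) x).

End ConeDefs.

Record coneComplex := ConeComplex {
  cc_type :> topologicalType;
  cc_cones : set (set cc_type);
  cc_M : set cc_type -> set (cc_type -> RR);
  cc_ax : is_cone_complex cc_cones cc_M }.
Arguments cc_cones : clear implicits.
Arguments cc_M : clear implicits.

Section ComplexDefs.

Definition crelint (D : coneComplex) (sigma : set D) : set D :=
  relint sigma (cc_M D sigma).

Definition is_face (D : coneComplex) (tau sigma : set D) : Prop :=
  cc_cones D sigma /\ cc_cones D tau /\ cone_face sigma (cc_M D sigma) tau.

Definition maximal_cone (D : coneComplex) (tau : set D) : Prop :=
  cc_cones D tau /\ forall sigma, is_face tau sigma -> tau = sigma.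

Definition minimal_cone (D : coneComplex) (L : set D) : Prop :=
  cc_cones D L /\ forall tau, is_face tau L -> tau = L.

Definition cc_connected (D : coneComplex) : Prop :=
  exists! L : set D, minimal_cone L.

Definition is_morphism (D S : coneComplex) (f : D -> S) : Prop :=
  continuous f /\
  forall sigma', cc_cones D sigma' -> exists sigma, cc_cones S sigma /\
    f @` sigma' `<=` sigma /\
    forall u, cc_M S sigma u -> cc_M D sigma' (restr sigma' (u \o f)).

Definition is_iso (D S : coneComplex) (g : D -> S) : Prop :=
  is_morphism g /\ exists h : S -> D, is_morphism h /\
    (forall x, h (g x) = x) /\ (forall y, g (h y) = y).

Definition is_weight (D : coneComplex) (w : D -> nat) : Prop :=
  (forall x, (0 < w x)%N) /\
  forall tau, cc_cones D tau -> forall x y,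
    crelint tau x -> crelint tau y -> w x = w y.

Definition trace (D S : coneComplex) (g : D -> S) (w : D -> nat) (V : set D)
    (x : S) : nat :=
  (\sum_(y \in V `&` g @^-1` [set x]) w y)%R.

Definition is_branched_cover (D : coneComplex) (w : D -> nat)
    (S : coneComplex) (f : D -> S) : Prop :=
  cc_connected D /\ cc_connected S /\ is_weight w /\ is_morphism f /\
  (forall sigma, cc_cones D sigma -> exists tau, cc_cones S tau /\
     f @` crelint sigma `<=` crelint tau /\
     f @` sigma = tau /\
     (forall x y, sigma x -> sigma y -> f x = f y -> x = y) /\
     [set restr sigma (u \o f) | u in cc_M S tau] = cc_M D sigma) /\
  (forall U : set S, open U -> connected U ->
     forall y, (f @^-1` U) y ->
     forall x1 x2, U x1 -> U x2 ->
       trace f w (connected_component (f @^-1` U) y) x1 =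
       trace f w (connected_component (f @^-1` U) y) x2).

Definition cover_ge (D' : coneComplex) (w' : D' -> nat)
    (D : coneComplex) (w : D -> nat) (S : coneComplex)
    (f' : D' -> S) (f : D -> S) : Prop :=
  exists g : D' -> D, is_morphism g /\ (forall x, f' x = f (g x)) /\
    forall x, trace g w' setT x = w x.

Definition cover_iso (D' : coneComplex) (w' : D' -> nat)
    (D : coneComplex) (w : D -> nat) (S : coneComplex)
    (f' : D' -> S) (f : D -> S) : Prop :=
  exists g : D' -> D, is_iso g /\ (forall x, f' x = f (g x)) /\
    forall x, w' x = w (g x).

Definition maximal_cover (D : coneComplex) (w : D -> nat)
    (S : coneComplex) (f : D -> S) : Prop :=
  forall (D' : coneComplex) (w' : D' -> nat) (f' : D' -> S),
    is_branched_cover w' f' ->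
    (forall x, trace f' w' setT x = trace f w setT x) ->
    cover_ge w' w f' f -> cover_iso w' w f' f.

Definition ramified_along (D : coneComplex) (w : D -> nat) (tau : set D) :
    Prop :=
  cc_cones D tau /\ ~ minimal_cone tau /\
  exists x, crelint tau x /\ (1 < w x)%N.

End ComplexDefs.

From HB Require Import structures.
From mathcomp Require Import all_boot all_algebra.
From mathcomp Require Import boolp classical_sets functions cardinality fsbigop
  reals topology.
From mathcomp Require Import Rstruct Rstruct_topology.
From mathcomp Require Import finmap.
Import GRing.Theory.

Set Implicit Arguments.
Unset Strict Implicit.
Unset Printing Implicit Defensive.

Local Open Scope classical_set_scope.
Local Open Scope ring_scope.

(* Let [tau] be a maximal cone along which [f] is ramified. Every other cone
   is closed and misses the relative interior of [tau], which is therefore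
   open in [|Delta|]. Cut [|Delta|] open along it: glue to [|Delta|] a second
   copy of the relative interior of [tau], attached along the boundary of
   [tau]. Giving the old copy weight 1 and the new one weight [w - 1], the
   composite with [f] is again a branched cover of the same degree, and the
   projection shows that it dominates [f]. It is not isomorphic to [f]: over
   the image of a point of the relative interior of [tau] it has strictly more
   points. This contradicts the maximality of [f]. *)

Lemma restr_in (T : topologicalType) (A : set T) u x :
  A x -> restr A u x = u x.
Proof. by move=> Ax; rewrite /restr asboolT. Qed.

Lemma restr_notin (T : topologicalType) (A : set T) u x :
  ~ A x -> restr A u x = 0.
Proof. by move=> Ax; rewrite /restr asboolF. Qed.

Lemma continuous_within_comp (T U : topologicalType) (A : set T) (B : set U)
    (g : T -> U) (u : U -> RR) :
  continuous g -> g @` A `<=` B -> {within B, continuous u} ->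
  {within A, continuous (u \o g)}.
Proof.
move=> gc gAB /subspace_continuousP uc; apply/subspace_continuousP => x Ax W hW.
have Bgx : B (g x) by apply: gAB; exists x.
have := uc (g x) Bgx W hW; rewrite /= !nbhs_simpl /within /= => hV.
have hgV : nbhs x (g @^-1` [set y | B y -> W (u y)]) by exact: gc x _ hV.
apply: filterS hgV => z /= h Az.
by apply: h; apply: gAB; exists z.
Qed.

Lemma cone_face_sub (T : topologicalType) (s : set T) M F :
  cone_face s M F -> F `<=` s.
Proof. by case=> k [c [u [_ [_ ->]]]] x []. Qed.

Section ConeComplexAxioms.
Variable D : coneComplex.

Local Notation cones := (cc_cones D).
Local Notation MD := (cc_M D).

Lemma cc_finite : finite_set cones.
Proof. by have [h _] := cc_ax D. Qed.

Lemma cc_closed s : cones s -> closed s.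
Proof. by have [_ [h _]] := cc_ax D; apply: h. Qed.

Lemma cc_fg s : cones s -> fg_function_group s (MD s).
Proof. by have [_ [_ [h _]]] := cc_ax D; apply: h. Qed.

Lemma cc_rational s : cones s -> eval_is_rational_cone s (MD s).
Proof. by have [_ [_ [_ [h _]]]] := cc_ax D; apply: h. Qed.

Lemma cc_face s F : cones s -> cone_face s (MD s) F ->
  cones F /\ MD F = [set restr F u | u in MD s].
Proof. by have [_ [_ [_ [_ [h _]]]]] := cc_ax D; apply: h. Qed.

Lemma cc_relint_ex1 x : exists! s, cones s /\ relint s (MD s) x.
Proof. by have [_ [_ [_ [_ [_ h]]]]] := cc_ax D. Qed.

Lemma cc_relint_unique x s1 s2 : cones s1 -> relint s1 (MD s1) x ->
  cones s2 -> relint s2 (MD s2) x -> s1 = s2.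
Proof.
move=> c1 r1 c2 r2; have [s [_ hs]] := cc_relint_ex1 x.
by rewrite -(hs s1) // -(hs s2).
Qed.

Lemma cc_vanish s u x : cones s -> MD s u -> ~ s x -> u x = 0.
Proof. by move=> cs Mu; have [_ [_]] := cc_fg cs; apply. Qed.

Definition subcone_count (s : set D) : nat :=
  #|` fset_set (cones `&` [set r | r `<=` s])%classic|%fset.

Lemma subcone_count_lt F s : cones F -> cones s -> F `<=` s -> F <> s ->
  (subcone_count F < subcone_count s)%N.
Proof.
move=> cF cs Fs Fns; apply: fproper_ltn_card.
have fin (r : set D) : finite_set (cones `&` [set r' | r' `<=` r]).
  by apply: sub_finite_set cc_finite => ? [].
rewrite fproperE; apply/andP; split.
  by rewrite -fset_set_sub // => r [cr rF]; split => //; apply: subset_trans Fs.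
apply/negP; rewrite -fset_set_sub // => /(_ s (conj cs (@subset_refl _ s))) [_ sF].
by apply: Fns; apply/seteqP.
Qed.

End ConeComplexAxioms.

Section MaximalCone.
Variables (D : coneComplex) (tau : set D).
Hypothesis tau_max : maximal_cone tau.

Local Notation cones := (cc_cones D).
Local Notation MD := (cc_M D).

Lemma maximal_cone_is_cone : cones tau.
Proof. by case: tau_max. Qed.

(* Descend from [s] through proper faces containing [x], by induction on the
   number of subcones; a proper face of [s] is never the maximal cone [tau]. *)
Lemma cone_meets_relint_maximal s x :
  cones s -> s x -> crelint tau x -> s = tau.
Proof.
move=> cs sx rx; apply: contrapT => snt.
suff : forall n s, (subcone_count s < n)%N -> cones s -> s x -> s <> tau -> False.
  by move/(_ (subcone_count s).+1 s (ltnSn _)); apply.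
clear s cs sx snt; elim=> [//|n IH] s hn cs sx snt.
have [F [hF [Fx FneS]]] : exists F, cone_face s (MD s) F /\ F x /\ F <> s.
  apply: contrapT => H; apply/snt/(cc_relint_unique cs _ maximal_cone_is_cone rx).
  by split => // F hF Fx; apply: contrapT => ne; apply: H; exists F.
have [cF _] := cc_face cs hF.
apply: (IH F) => //.
  exact: leq_trans (subcone_count_lt cF cs (cone_face_sub hF) FneS) hn.
move=> Ft; apply: FneS; rewrite Ft.
by case: tau_max => _ /(_ s); rewrite -Ft => /(_ (conj cs (conj cF hF))).
Qed.

Lemma open_relint_maximal_cone : open (crelint tau).
Proof.
have -> : crelint tau = ~` \bigcup_(s in [set s | cones s /\ s <> tau]) s.
  apply/seteqP; split => x.
    by move=> rx [s [cs snt] sx]; apply/snt/(cone_meets_relint_maximal cs sx).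
  move=> nx; have [s [[cs [sx rs]] _]] := cc_relint_ex1 x.
  have [st|snt] := pselect (s = tau); first by rewrite /crelint -st.
  by exfalso; apply: nx; exists s.
apply/closed_openC/closed_bigcup.
  by apply: sub_finite_set (cc_finite D) => ? [].
by move=> s [cs _]; apply: cc_closed.
Qed.

End MaximalCone.

(** * Cutting open along a maximal cone *)

Section CutSpace.
Variables (D : coneComplex) (tau : set D).

Local Notation rel := (crelint tau).

(* [inl x] is the original point [x]; [inr x] is the second copy of a point
   [x] of the relative interior of [tau]. *)
Definition cut_space : Type := (D + set_type rel)%type.

HB.instance Definition _ := Choice.on cut_space.

Definition cut_proj (p : cut_space) : D :=
  match p with inl x => x | inr s => set_val s end.

Definition cut_sheet (p : cut_space) : bool := if p is inr _ then true else false.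

Definition cut_lift (b : bool) (x : D) : cut_space :=
  if b then if pselect (rel x) is left h then inr (SigSub (mem_set h)) else inl x
  else inl x.

(* This glues the second copy of [crelint tau] to [D] along the boundary of
   [tau]. *)
Definition cut_open (U : set cut_space) : Prop :=
  open (cut_lift false @^-1` U) /\ open (cut_lift true @^-1` U).

Lemma cut_openT : cut_open setT.
Proof. by split; rewrite preimage_setT; exact: openT. Qed.

Lemma cut_openI : setI_closed cut_open.
Proof. by move=> A B [? ?] [? ?]; split; rewrite preimage_setI; exact: openI. Qed.

Lemma cut_open_bigcup (I : Type) (F : I -> set cut_space) :
  (forall i, cut_open (F i)) -> cut_open (\bigcup_i F i).
Proof.
by move=> oF; split; rewrite preimage_bigcup; apply: bigcup_open => i _; apply oF.
Qed.

HB.instance Definition _ :=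
  isOpenTopological.Build cut_space cut_openT cut_openI cut_open_bigcup.

Lemma cut_proj_lift b x : cut_proj (cut_lift b x) = x.
Proof. by rewrite /cut_lift; case: b => //; case: pselect. Qed.

Lemma cut_lift_notin b x : ~ rel x -> cut_lift b x = inl x.
Proof. by rewrite /cut_lift; case: b => //; case: pselect. Qed.

Lemma cut_sheet_lift b x : rel x -> cut_sheet (cut_lift b x) = b.
Proof. by rewrite /cut_lift; case: b => //; case: pselect. Qed.

Lemma cut_lift_sheet p : cut_lift (cut_sheet p) (cut_proj p) = p.
Proof.
case: p => //= s; rewrite /cut_lift; case: pselect => [h|].
  by congr inr; apply/val_inj.
by have := set_valP s.
Qed.

Lemma cut_lift_eq c b x y :
  cut_lift c x = cut_lift b y <-> x = y /\ (c = b \/ ~ rel x).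
Proof.
split; last by move=> [<- [<-|nx]] //; rewrite !cut_lift_notin.
move=> e; have xy : x = y by rewrite -(cut_proj_lift c x) e cut_proj_lift.
split=> //; have [rx|] := pselect (rel x); last by right.
by left; rewrite -(cut_sheet_lift c rx) e -xy cut_sheet_lift.
Qed.

Lemma cut_lift_inj b : injective (cut_lift b).
Proof. by move=> x y /cut_lift_eq []. Qed.

Lemma continuous_cut_lift b : continuous (cut_lift b).
Proof. by apply/continuousP => A [? ?]; case: b. Qed.

Lemma continuous_cut_proj : continuous cut_proj.
Proof.
apply/continuousP => A oA; split => //.
have -> : cut_lift true @^-1` (cut_proj @^-1` A) = A.
  by apply/seteqP; split => x; rewrite /preimage /= (cut_proj_lift true).
exact: oA.
Qed.

Lemma cut_lift_preimage_image c b (s : set D) :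
  cut_lift c @^-1` (cut_lift b @` s) = [set x | s x /\ (c = b \/ ~ rel x)].
Proof.
apply/seteqP; split => x /=.
  move=> [y sy] /cut_lift_eq [<- h]; split => //.
  by case: h => [->|]; [left|right].
move=> [sx h]; exists x => //; apply/cut_lift_eq.
by split => //; case: h => [->|]; [left|right].
Qed.

Lemma cut_proj_image_lift b (s : set D) : cut_proj @` (cut_lift b @` s) = s.
Proof.
apply/seteqP; split => x /=.
  by move=> [p [y sy <-] <-]; rewrite cut_proj_lift.
by move=> sx; exists (cut_lift b x); [exists x | rewrite cut_proj_lift].
Qed.

Lemma cut_lift_imageP b (s : set D) p :
  (cut_lift b @` s) p -> s (cut_proj p) /\ cut_lift b (cut_proj p) = p.
Proof. by move=> [y sy <-]; rewrite cut_proj_lift. Qed.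

Hypothesis tau_max : maximal_cone tau.

Lemma open_relint_if (P : Prop) : open [set x | P /\ rel x].
Proof.
have [p|np] := pselect P.
  rewrite (_ : [set x | _] = rel); first exact: open_relint_maximal_cone.
  by apply/seteqP; split => x //= [].
by rewrite (_ : [set x | _] = set0); [exact: open0|apply/seteqP; split => x //= []].
Qed.

Lemma open_cut_sheet b :
  open [set p : cut_space | cut_sheet p = b /\ rel (cut_proj p)].
Proof.
split; first exact: (open_relint_if (false = b)).
have -> : cut_lift true @^-1` [set p | cut_sheet p = b /\ rel (cut_proj p)] =
    [set x | true = b /\ rel x].
  apply/seteqP; split => x; rewrite /preimage /= (cut_proj_lift true) => -[h rx];
    by rewrite (cut_sheet_lift true rx) in h *.
exact: open_relint_if.
Qed.

Lemma open_not_in_or_relint (s : set D) (P : Prop) : closed s ->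
  open (~` [set x | s x /\ (P \/ ~ rel x)]).
Proof.
move=> cs.
have -> : ~` [set x | s x /\ (P \/ ~ rel x)] = ~` s `|` [set x | ~ P /\ rel x].
  apply/seteqP; split => x /=.
    move=> h; have [sx|] := pselect (s x); last by left.
    by right; split; [move=> p|apply: contrapT => nr]; apply: h; split; tauto.
  by case=> [nsx [] //| [np rx] [sx [p|nr]]]; [apply: np | apply: nr].
exact/openU/open_relint_if/closed_openC.
Qed.

Lemma closed_cut_lift_image b (s : set D) : closed s -> closed (cut_lift b @` s).
Proof.
move=> cs; rewrite -openC.
by split; [move: (open_not_in_or_relint (false = b) cs)|
           move: (open_not_in_or_relint (true = b) cs)];
  rewrite -cut_lift_preimage_image preimage_setC.
Qed.

End CutSpace.

Arguments cut_lift : simpl never.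

Section CutComplex.
Variables (D : coneComplex) (tau : set D).

Local Notation cones := (cc_cones D).
Local Notation MD := (cc_M D).
Local Notation rel := (crelint tau).
Local Notation lift := (cut_lift tau).
Local Notation proj := (@cut_proj D tau).

Definition cut_cones : set (set (cut_space tau)) :=
  [set X | exists s b, cones s /\ X = lift b @` s].

Definition cut_M (X : set (cut_space tau)) : set (cut_space tau -> RR) :=
  [set restr X (u \o proj) | u in MD (proj @` X)].

Lemma cut_M_lift b (s : set D) :
  cut_M (lift b @` s) = [set restr (lift b @` s) (u \o proj) | u in MD s].
Proof. by rewrite /cut_M cut_proj_image_lift. Qed.

Lemma restr_zspan_comp (X : set (cut_space tau)) n (g : 'I_n -> D -> RR)
    (k : 'I_n -> int) :
  restr X ((fun x => \sum_(i < n) (k i)%:~R * g i x) \o proj) =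
  fun p => \sum_(i < n) (k i)%:~R * restr X (g i \o proj) p.
Proof.
apply/funext => p; have [Xp|nXp] := pselect (X p).
  by rewrite restr_in //; apply: eq_bigr => i _; rewrite restr_in.
by rewrite restr_notin // big1 // => i _; rewrite restr_notin // mulr0.
Qed.

Lemma fg_cut_lift b s : cones s ->
  fg_function_group (lift b @` s) (cut_M (lift b @` s)).
Proof.
move=> cs; have [[n [g Mg]] [cont van]] := cc_fg cs.
rewrite cut_M_lift; split; [|split].
- exists n, (fun i => restr (lift b @` s) (g i \o proj)).
  apply/seteqP; split => u' /=.
    by move=> [u]; rewrite Mg => -[k ->] <-; exists k; exact: restr_zspan_comp.
  move=> [k ->]; exists (fun x => \sum_(i < n) (k i)%:~R * g i x).
    by rewrite Mg; exists k.
  exact: restr_zspan_comp.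
- move=> _ [u Mu <-].
  apply: (@subspace_eq_continuous _ _ _ (u \o proj)).
    by move=> p /set_mem Xp; rewrite /from_subspace restr_in.
  apply: (continuous_within_comp (B := s)); last exact: cont.
    exact: continuous_cut_proj.
  by rewrite cut_proj_image_lift.
- by move=> _ [u Mu <-] x nx; exact: restr_notin.
Qed.

Lemma restr_cut_M_lift b s u : cones s -> MD s u ->
  restr s (restr (lift b @` s) (u \o proj) \o lift b) = u.
Proof.
move=> cs Mu; apply/funext => x /=; have [sx|nx] := pselect (s x).
  by rewrite restr_in //= restr_in /= ?cut_proj_lift //; exact: imageP.
by rewrite restr_notin // (cc_vanish cs Mu nx).
Qed.

Lemma rational_cut_lift b s : cones s ->
  eval_is_rational_cone (lift b @` s) (cut_M (lift b @` s)).
Proof.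
move=> cs; have [inj [[k [nv [add [pt lm]]]] top]] := cc_rational cs.
rewrite cut_M_lift; set X := lift b @` s.
have restr_liftE u x : s x -> restr X (u \o proj) (lift b x) = u x.
  by move=> sx; rewrite restr_in /= ?cut_proj_lift //; exact: imageP.
split; [|split].
- move=> _ _ [x sx <-] [y sy <-] h; congr (lift b); apply: inj => // u Mu.
  by rewrite -!restr_liftE //; apply: h; exists u.
- exists k, (fun j u' => nv j (restr s (u' \o lift b))); split; [|split].
  + move=> j _ _ [u Mu <-] [v Mv <-].
    have -> : restr s ((fun x => restr X (u \o proj) x + restr X (v \o proj) x)
        \o lift b) = (fun x => u x + v x).
      apply/funext => x /=; have [sx|nx] := pselect (s x).
        by rewrite restr_in //= !restr_liftE.
      by rewrite restr_notin // (cc_vanish cs Mu nx) (cc_vanish cs Mv nx) addr0.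
    by rewrite !restr_cut_M_lift //; apply: add.
  + move=> _ [x sx <-]; have [lam [l0 hl]] := pt x sx; exists lam; split => //.
    by move=> _ [u Mu <-]; rewrite restr_liftE // restr_cut_M_lift //; apply: hl.
  + move=> lam l0; have [x [sx hx]] := lm lam l0.
    exists (lift b x); split; first exact: imageP.
    by move=> _ [u Mu <-]; rewrite restr_liftE // restr_cut_M_lift //; apply: hx.
- move=> _ U [x sx <-] hU.
  have hU' : nbhs x (lift b @^-1` U) by exact: continuous_cut_lift b x _ hU.
  have [m [u [e [e0 [Mu hy]]]]] := top x _ sx hU'.
  exists m, (fun i => restr X (u i \o proj)), e; split => //; split.
    by move=> i; exists (u i).
  by move=> _ [y sy <-] hd; apply: (hy y sy) => i; rewrite -!restr_liftE.
Qed.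

Lemma cone_face_cut_lift b s G : cones s -> cone_face s (MD s) G ->
  cone_face (lift b @` s) (cut_M (lift b @` s)) (lift b @` G).
Proof.
move=> cs [k [c [v [Mv [nn ->]]]]]; rewrite cut_M_lift; set X := lift b @` s.
have key y : s y -> \sum_(i < k) c i * restr X (v i \o proj) (lift b y) =
    \sum_(i < k) c i * v i y.
  move=> sy; apply: eq_bigr => i _.
  by rewrite restr_in /= ?cut_proj_lift //; exact: imageP.
exists k, c, (fun i => restr X (v i \o proj)).
split; first by move=> i; exists (v i).
split; first by move=> _ [y sy <-]; rewrite key //; apply: nn.
apply/seteqP; split => q /=.
  by move=> [y [sy h0] <-]; split; [exact: imageP | rewrite key].
by move=> [[y sy <-] h0]; exists y => //; split => //; rewrite -key.
Qed.

Lemma cone_face_cut_liftP b s F : cones s ->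
  cone_face (lift b @` s) (cut_M (lift b @` s)) F ->
  exists2 G, cone_face s (MD s) G & F = lift b @` G.
Proof.
move=> cs [k [c [u' [Mu' [nn ->]]]]]; rewrite cut_M_lift in Mu'.
set X := lift b @` s.
have [v hv] := @choice _ _ (fun i v => MD s v /\ restr X (v \o proj) = u' i)
  (fun i => let: ex_intro2 v Mv e := Mu' i in ex_intro _ v (conj Mv e)).
have key y : s y ->
    \sum_(i < k) c i * u' i (lift b y) = \sum_(i < k) c i * v i y.
  move=> sy; apply: eq_bigr => i _; have [_ <-] := hv i.
  by rewrite restr_in /= ?cut_proj_lift //; exact: imageP.
exists [set y | s y /\ \sum_(i < k) c i * v i y = 0].
  exists k, c, v; split; first by move=> i; case: (hv i).
  by split => // y sy; rewrite -key //; apply: nn; exact: imageP.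
apply/seteqP; split => q /=.
  by move=> [[y sy <-] h0]; exists y => //; split => //; rewrite -key.
by move=> [y [sy h0] <-]; split; [exact: imageP | rewrite key].
Qed.

Lemma relint_cut_lift b s p : cones s ->
  relint (lift b @` s) (cut_M (lift b @` s)) p <->
  (lift b @` s) p /\ relint s (MD s) (proj p).
Proof.
move=> cs; split.
  move=> [Xp hF]; split => //; have [sp ep] := cut_lift_imageP Xp.
  split => // G hG Gp.
  have := hF _ (cone_face_cut_lift b cs hG); rewrite -ep.
  move=> /(_ (imageP (lift b) Gp)) h.
  by rewrite -(cut_proj_image_lift tau b G) h cut_proj_image_lift.
move=> [Xp [sp hG]]; split => // F hF Fp.
have [G hG' eF] := cone_face_cut_liftP cs hF; rewrite eF in Fp *.
by have [Gp _] := cut_lift_imageP Fp; rewrite (hG G hG' Gp).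
Qed.

Lemma cut_face X F : cut_cones X -> cone_face X (cut_M X) F ->
  cut_cones F /\ cut_M F = [set restr F u | u in cut_M X].
Proof.
move=> [s [b [cs ->]]] hF; have [G hG ->] := cone_face_cut_liftP cs hF.
have [cG MG] := cc_face cs hG; split; first by exists G, b.
have eq v : restr (lift b @` G) (restr G v \o proj) =
    restr (lift b @` G) (restr (lift b @` s) (v \o proj)).
  apply/funext => p.
  have [Fp|nFp] := pselect ((lift b @` G) p); last by rewrite !restr_notin.
  have [Gp ep] := cut_lift_imageP Fp.
  rewrite !restr_in //= ?restr_in // -ep; apply: imageP.
  exact: cone_face_sub hG _ Gp.
rewrite !cut_M_lift MG; apply/seteqP; split => q /=.
  move=> [_ [v Mv <-] <-]; exists (restr (lift b @` s) (v \o proj)).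
    by exists v.
  by rewrite eq.
by move=> [_ [v Mv <-] <-]; exists (restr G v); [exists v|rewrite eq].
Qed.

Lemma finite_cut_cones : finite_set cut_cones.
Proof.
apply: (@sub_finite_set _ _ ((fun q : set D * bool => lift q.2 @` q.1) @`
    (cones `*` [set: bool]))).
  by move=> X [s [b [cs ->]]]; exists (s, b).
by apply/finite_image/finite_setX; [exact: cc_finite | exact: finite_finset].
Qed.

Hypothesis tau_max : maximal_cone tau.

Lemma cut_lift_image_other b1 b2 s : cones s -> s <> tau ->
  lift b1 @` s = lift b2 @` s.
Proof.
move=> cs snt.
have nr y : s y -> ~ rel y.
  by move=> sy ry; apply/snt/(cone_meets_relint_maximal tau_max cs sy ry).
apply/seteqP; split => _ [y sy <-]; exists y => //; rewrite !cut_lift_notin //;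
  exact: nr.
Qed.

Lemma cut_relint_ex1 p : exists! X, cut_cones X /\ relint X (cut_M X) p.
Proof.
have [s [[cs rs] _]] := cc_relint_ex1 (proj p).
exists (lift (cut_sheet p) @` s); split.
  split; first by exists s, (cut_sheet p).
  apply/relint_cut_lift => //; split => //.
  by exists (proj p); [case: rs|exact: cut_lift_sheet].
move=> _ [[s2 [b2 [cs2 ->]]] /(relint_cut_lift b2 p cs2) [Yp rs2]].
have e := cc_relint_unique cs rs cs2 rs2; subst s2.
have [st|snt] := pselect (s = tau); last exact: cut_lift_image_other.
have [_ ep] := cut_lift_imageP Yp.
have rp : rel (proj p) by move: rs; rewrite st.
by rewrite -ep cut_sheet_lift // cut_proj_lift.
Qed.

Lemma cut_is_cone_complex : is_cone_complex cut_cones cut_M.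
Proof.
split; first exact: finite_cut_cones.
split.
  move=> _ [s [b [cs ->]]].
  by apply: (closed_cut_lift_image tau_max); apply: cc_closed.
split; first by move=> _ [s [b [cs ->]]]; apply: fg_cut_lift.
split; first by move=> _ [s [b [cs ->]]]; apply: rational_cut_lift.
split; first exact: cut_face.
exact: cut_relint_ex1.
Qed.

Definition cut_complex : coneComplex := ConeComplex cut_is_cone_complex.

End CutComplex.

(** * The cut-open branched cover *)

Section BranchedCover.
Variables (D S : coneComplex) (w : D -> nat) (f : D -> S).
Hypothesis f_cover : is_branched_cover w f.

Lemma branched_cover_source_connected : cc_connected D.
Proof. by case: f_cover. Qed.

Lemma branched_cover_target_connected : cc_connected S.
Proof. by case: f_cover => _ []. Qed.

Lemma branched_cover_weight : is_weight w.
Proof. by case: f_cover => _ [_ []]. Qed.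

Lemma branched_cover_morphism : is_morphism f.
Proof. by case: f_cover => _ [_ [_ []]]. Qed.

Lemma branched_cover_cone_iso s : cc_cones D s -> exists t, cc_cones S t /\
  f @` crelint s `<=` crelint t /\ f @` s = t /\
  (forall x y, s x -> s y -> f x = f y -> x = y) /\
  [set restr s (u \o f) | u in cc_M S t] = cc_M D s.
Proof. by case: f_cover => _ [_ [_ [_ [h _]]]]; apply: h. Qed.

Lemma branched_cover_trace (U : set S) : open U -> connected U ->
  forall y, (f @^-1` U) y -> forall x1 x2, U x1 -> U x2 ->
  trace f w (connected_component (f @^-1` U) y) x1 =
  trace f w (connected_component (f @^-1` U) y) x2.
Proof. by case: f_cover => _ [_ [_ [_ [_ h]]]]; apply: h. Qed.

Lemma branched_cover_finite_fibre z : finite_set (f @^-1` [set z]).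
Proof.
apply: (@sub_finite_set _ _ (\bigcup_(s in cc_cones D) (s `&` f @^-1` [set z]))).
  move=> x fx; have [s [[cs [sx _]] _]] := cc_relint_ex1 x.
  by exists s.
apply: bigcup_finite; first exact: cc_finite.
move=> s cs; have [t [_ [_ [_ [inj _]]]]] := branched_cover_cone_iso cs.
have [[y [sy fy]]|none] := pselect (exists y, s y /\ f y = z).
  apply: (sub_finite_set _ (finite_set1 y)) => x [sx fx].
  by apply: inj => //; rewrite fx fy.
by apply: (sub_finite_set _ (finite_set0 _)) => x [sx fx]; apply: none; exists x.
Qed.

End BranchedCover.

Lemma fsumr_const (R : pzSemiRingType) (T : choiceType) (Z : set T) (k : R) :
  finite_set Z -> \sum_(z \in Z) k = k * \sum_(z \in Z) (1 : R).
Proof.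
by move=> fZ; rewrite fsbig_distrr //; apply: eq_fsbigr => z _; exact/esym/mulr1.
Qed.

Section CutCover.
Variables (D S : coneComplex) (w : D -> nat) (f : D -> S) (tau : set D).
Hypothesis f_cover : is_branched_cover w f.
Hypothesis tau_max : maximal_cone tau.
Hypothesis tau_ram : ramified_along w tau.

Local Notation cones := (cc_cones D).
Local Notation rel := (crelint tau).
Local Notation lift := (cut_lift tau).
Local Notation proj := (@cut_proj D tau).
Local Notation D' := (cut_complex tau_max).

Let w_weight : is_weight w := branched_cover_weight f_cover.
Let tau_cone : cones tau := maximal_cone_is_cone tau_max.

Definition cut_weight (p : D') : nat :=
  if `[< rel (proj p) >] then (if cut_sheet p then (w (proj p)).-1 else 1%N)
  else w (proj p).

Definition cut_map (p : D') : S := f (proj p).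

Lemma weight_relint_gt1 x : rel x -> (1 < w x)%N.
Proof.
case: tau_ram => _ [_ [x0 [r0 w0]]] rx.
by rewrite (w_weight.2 tau tau_cone x x0).
Qed.

Lemma weight_relint_const x y : rel x -> rel y -> w x = w y.
Proof.
by move=> rx ry; apply: (w_weight.2 tau tau_cone).
Qed.

Lemma cut_weight_lift_false x :
  cut_weight (lift false x) = if `[< rel x >] then 1%N else w x.
Proof. by rewrite /cut_weight cut_proj_lift; case: asboolP. Qed.

Lemma cut_weight_lift_true x : rel x -> cut_weight (lift true x) = (w x).-1.
Proof.
by move=> rx; rewrite /cut_weight cut_proj_lift asboolT // cut_sheet_lift.
Qed.

Lemma minimal_cone_cut_lift b s : cones s ->
  minimal_cone (lift b @` s : set D') <-> minimal_cone s.
Proof.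
move=> cs; split.
  move=> [_ h]; split => // G [_ [cG hG]].
  have c1 : cut_cones (lift b @` s) by exists s, b.
  have c2 : cut_cones (lift b @` G) by exists G, b.
  have := h (lift b @` G) (conj c1 (conj c2 (cone_face_cut_lift tau b cs hG))).
  by move=> e; rewrite -(cut_proj_image_lift tau b G) e cut_proj_image_lift.
move=> [_ h]; split; first by exists s, b.
move=> F [_ [_ hF]]; have [G hG ->] := cone_face_cut_liftP cs hF.
by have [cG _] := cc_face cs hG; rewrite (h G (conj cs (conj cG hG))).
Qed.

Lemma cut_connected : cc_connected D'.
Proof.
have [L [mL uL]] := branched_cover_source_connected f_cover.
have cL : cones L by case: mL.
have Lnt : L <> tau by case: tau_ram => _ [nmin _] eL; apply: nmin; rewrite -eL.
exists (lift false @` L); split; first exact/(minimal_cone_cut_lift false cL).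
move=> Y hY; have [[s [b [cs eY]]] _] := hY; rewrite eY in hY *.
have ms := (minimal_cone_cut_lift b cs).1 hY.
by rewrite -(uL s ms); apply: (cut_lift_image_other tau_max).
Qed.

Lemma cut_is_weight : is_weight cut_weight.
Proof.
split.
  move=> p; rewrite /cut_weight; case: asboolP => [r|_]; last exact: w_weight.1.
  by case: (cut_sheet p) => //; rewrite -subn1 subn_gt0; apply: weight_relint_gt1.
move=> _ [s [b [cs ->]]] p q.
move=> /(relint_cut_lift b p cs) [Xp rsp] /(relint_cut_lift b q cs) [Xq rsq].
have [_ <-] := cut_lift_imageP Xp; have [_ <-] := cut_lift_imageP Xq.
have [st|snt] := pselect (s = tau).
  rewrite st in rsp rsq; case: b {Xp Xq}.
    by rewrite !cut_weight_lift_true // (weight_relint_const rsp rsq).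
  by rewrite !cut_weight_lift_false !asboolT.
have nr r : relint s (cc_M D s) r -> ~ rel r.
  by move=> rs rr; apply/snt/(cc_relint_unique cs rs tau_cone rr).
have [np nq] := (nr _ rsp, nr _ rsq).
by rewrite /cut_weight !cut_proj_lift !asboolF //; apply: (w_weight.2 s cs).
Qed.

Lemma restr_cut_map (X : set D') (s : set D) (u : S -> RR) : proj @` X `<=` s ->
  restr X (restr s (u \o f) \o proj) = restr X (u \o cut_map).
Proof.
move=> Xs; apply/funext => p.
have [Xp|nXp] := pselect (X p); last by rewrite !restr_notin.
by rewrite !restr_in //= restr_in //; apply: Xs; exists p.
Qed.

Lemma cut_map_morphism : is_morphism cut_map.
Proof.
have [f_cont f_cones] := branched_cover_morphism f_cover.
split; first by move=> p; apply/continuous_comp/f_cont; exact: continuous_cut_proj.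
move=> _ [s [b [cs ->]]]; have [t [ct [img Mt]]] := f_cones s cs.
exists t; split => //; split.
  by move=> _ [p /cut_lift_imageP [sp _] <-]; apply: img; exists (proj p).
move=> u Mu; rewrite /= cut_M_lift; exists (restr s (u \o f)); first exact: Mt.
by apply: restr_cut_map; rewrite cut_proj_image_lift.
Qed.

Lemma cut_map_cone_iso X : cc_cones D' X -> exists t, cc_cones S t /\
  cut_map @` crelint X `<=` crelint t /\ cut_map @` X = t /\
  (forall p q, X p -> X q -> cut_map p = cut_map q -> p = q) /\
  [set restr X (u \o cut_map) | u in cc_M S t] = cc_M D' X.
Proof.
move=> [s [b [cs ->]]].
have [t [ct [ri [img [inj Meq]]]]] := branched_cover_cone_iso f_cover cs.
exists t; split => //; split.
  by move=> _ [p /(relint_cut_lift b p cs) [_ rs] <-]; apply: ri; exists (proj p).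
split.
  rewrite -img; apply/seteqP; split => y [x].
    by move=> /cut_lift_imageP [sx _] <-; exists (proj x).
  by move=> sx <-; exists (lift b x); [exists x|rewrite /cut_map cut_proj_lift].
split.
  move=> p q /cut_lift_imageP [sp ep] /cut_lift_imageP [sq eq] e.
  by rewrite -ep -eq (inj _ _ sp sq e).
rewrite /= cut_M_lift -Meq; apply/seteqP; split => v.
  move=> [u Mu <-]; exists (restr s (u \o f)); first by exists u.
  by apply: restr_cut_map; rewrite cut_proj_image_lift.
move=> [_ [u Mu <-] <-]; exists u => //.
by rewrite restr_cut_map // cut_proj_image_lift.
Qed.

Lemma cut_proj_preimage (Z : set D) :
  proj @^-1` Z = lift false @` Z `|` lift true @` (Z `&` rel).
Proof.
apply/seteqP; split => p /=.
  move=> Zp; rewrite -(cut_lift_sheet p); case e: (cut_sheet p).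
    right; exists (proj p) => //; split => //.
    by case: p e Zp => // s _ _; apply: set_valP.
  by left; exists (proj p).
by case=> -[z Zz <-]; rewrite /preimage /= ?cut_proj_lift //; case: Zz.
Qed.

Lemma fsbig_cut_preimage (Z : set D) (phi : D' -> nat) : finite_set Z ->
  \sum_(p \in proj @^-1` Z) phi p =
  \sum_(z \in Z) phi (lift false z) + \sum_(z \in Z `&` rel) phi (lift true z).
Proof.
move=> fZ; rewrite cut_proj_preimage fsbigU0.
- by rewrite !fsbig_image // => x y _ _; apply: cut_lift_inj.
- exact: finite_image.
- by apply/finite_image/(sub_finite_set _ fZ) => z [].
- by move=> _ [[z Zz <-] [z' [_ rz'] /cut_lift_eq [_ [//|/(_ rz')]]]].
Qed.

Lemma fsbig_cut_weight (Z : set D) : finite_set Z ->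
  \sum_(p \in proj @^-1` Z) cut_weight p = \sum_(z \in Z) w z.
Proof.
move=> fZ; rewrite fsbig_cut_preimage // (fsbigID rel Z) // [RHS](fsbigID rel Z) //.
have fZr : finite_set (Z `&` rel) by apply: sub_finite_set fZ => z [].
rewrite addrAC -fsbig_split //; congr (_ + _); apply: eq_fsbigr => z /set_mem [_ rz].
  rewrite cut_weight_lift_false cut_weight_lift_true // asboolT //.
  by rewrite -[w z in RHS](ltn_predK (weight_relint_gt1 rz)).
by rewrite cut_weight_lift_false asboolF.
Qed.

Lemma cut_map_degree z : trace cut_map cut_weight setT z = trace f w setT z.
Proof.
rewrite /trace !setTI.
exact: (fsbig_cut_weight (branched_cover_finite_fibre f_cover z)).
Qed.

Lemma cut_proj_morphism : is_morphism (proj : D' -> D).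
Proof.
split; first exact: continuous_cut_proj.
move=> _ [s [b [cs ->]]]; exists s; split => //.
split; first by rewrite cut_proj_image_lift.
by move=> u Mu; rewrite /= cut_M_lift; exists u.
Qed.

Lemma cut_cover_ge : cover_ge cut_weight w cut_map f.
Proof.
exists proj; split; first exact: cut_proj_morphism.
by split => // x; rewrite /trace setTI fsbig_cut_weight ?fsbig_set1 ?finite_set1.
Qed.

(* Over [f x0], with [x0] in the relative interior of [tau], the cut cover
   has the points of the fibre of [f] plus their second copies. *)
Lemma cut_cover_not_iso : ~ cover_iso cut_weight w cut_map f.
Proof.
move=> [g [[_ [h [_ [hg gh]]]] [fg _]]].
have [_ [_ [x0 [r0 _]]]] := tau_ram.
set Z := f @^-1` [set f x0].
have fZ : finite_set Z := branched_cover_finite_fibre f_cover (f x0).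
have gZ : g @` (proj @^-1` Z) = Z.
  apply/seteqP; split => z; first by move=> [p Zp <-]; rewrite /Z /= -fg.
  by move=> Zz; exists (h z); rewrite // /Z /preimage /= -[f _]/(cut_map _) fg gh.
have : \sum_(z \in Z) 1%N = \sum_(p \in proj @^-1` Z) 1%N.
  by rewrite -{1}gZ fsbig_image // => p q _ _ /(can_inj hg).
have fZr : finite_set (Z `&` rel) by apply: sub_finite_set fZ => z [].
rewrite fsbig_cut_preimage // (fsbigD1 x0 _ _ fZr) // => /eqP.
by rewrite -[X in X == _]addn0 eqn_add2l.
Qed.

Section Components.
Variables (U : set S) (y : D').
Hypothesis Uy : (cut_map @^-1` U) y.

Local Notation C := (connected_component (f @^-1` U) (proj y)).
Local Notation C' := (connected_component (cut_map @^-1` U) y).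

Let C'y : C' y := connected_component_refl Uy.
Let Cy : C (proj y) := connected_component_refl (Uy : (f @^-1` U) (proj y)).

Lemma cut_component_proj_sub : proj @` C' `<=` C.
Proof.
apply: connected_component_max; first by exists y.
  by move=> _ [p /connected_component_sub Up <-].
apply: connected_continuous_connected; first exact: component_connected.
exact/continuous_subspaceT/continuous_cut_proj.
Qed.

Lemma cut_component_lift_sub b : lift b @` C `<=` cut_map @^-1` U.
Proof.
move=> _ [c /connected_component_sub Uc <-].
by rewrite /preimage /= /cut_map cut_proj_lift.
Qed.

Lemma connected_cut_lift_component b : connected (lift b @` C).
Proof.
apply: connected_continuous_connected; first exact: component_connected.
exact/continuous_subspaceT/continuous_cut_lift.
Qed.

(* If the component [C] leaves the relative interior of [tau], the two lifts
   of [C] meet there and the component upstairs is all of [proj^-1 C]. *)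
Lemma cut_component_full : (exists2 c, C c & ~ rel c) -> C' = proj @^-1` C.
Proof.
move=> [c0 Cc0 nc0]; apply/seteqP; split => p.
  by move=> C'p; apply: cut_component_proj_sub; exists p.
have sub : proj @^-1` C `<=` lift false @` C `|` lift true @` C.
  move=> q Cq; rewrite -(cut_lift_sheet q).
  by case: (cut_sheet q); [right|left]; exists (proj q).
move=> Cp.
apply: (connected_component_max (B := lift false @` C `|` lift true @` C)).
- by apply: sub; rewrite /preimage /= -(cut_lift_sheet y) cut_proj_lift.
- by move=> q [] /cut_component_lift_sub.
- apply: connectedU; try exact: connected_cut_lift_component.
  by exists (lift false c0); split; exists c0; rewrite // !cut_lift_notin.
- exact: sub.
Qed.

(* Inside the relative interior of [tau] the two sheets are open and
   disjoint, so a connected component stays on the sheet of [y]. *)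
Lemma cut_component_sheet : C `<=` rel -> C' = lift (cut_sheet y) @` C.
Proof.
move=> Cr; set b := cut_sheet y; apply/seteqP; split => p; last first.
  move: p; apply: connected_component_max.
  - by exists (proj y) => //; rewrite cut_lift_sheet.
  - exact: cut_component_lift_sub.
  - exact: connected_cut_lift_component.
move=> C'p.
have rC' q : C' q -> rel (proj q).
  by move=> C'q; apply/Cr/cut_component_proj_sub; exists q.
pose O c : set D' := [set q | cut_sheet q = c /\ rel (proj q)].
have eB : C' `&` O b = C'.
  have cC' : connected C' by exact: component_connected.
  apply: cC'.
  - by exists y; split => //; split => //; apply: rC'.
  - by exists (O b) => //; exact: open_cut_sheet tau_max b.
  - exists (~` O (~~ b)); first exact/open_closedC/(open_cut_sheet tau_max).
    apply/seteqP; split => q [C'q h]; split => //.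
      by move=> [e _]; case: h => e' _; move: e e'; case: (cut_sheet q); case: b.
    split; last exact: rC'.
    apply: contrapT => ne; apply: h; split; last exact: rC'.
    by move: ne; case: (cut_sheet q); case: b.
have [_ [sp _]] : (C' `&` O b) p by rewrite eB.
exists (proj p); last by rewrite -sp cut_lift_sheet.
by apply: cut_component_proj_sub; exists p.
Qed.

End Components.

Lemma cut_lift_image_fibre b (A : set D) z :
  lift b @` A `&` cut_map @^-1` [set z] = lift b @` (A `&` f @^-1` [set z]).
Proof.
rewrite /preimage /cut_map; apply/seteqP; split => p.
  by move=> [[x Ax <-]]; rewrite /= cut_proj_lift => fx; exists x.
by move=> [x [Ax fx] <-]; split; [exists x|rewrite /= cut_proj_lift].
Qed.

Lemma cut_map_trace (U : set S) : open U -> connected U ->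
  forall y, (cut_map @^-1` U) y -> forall x1 x2, U x1 -> U x2 ->
  trace cut_map cut_weight (connected_component (cut_map @^-1` U) y) x1 =
  trace cut_map cut_weight (connected_component (cut_map @^-1` U) y) x2.
Proof.
move=> oU cU y Uy x1 x2 U1 U2.
set C := connected_component (f @^-1` U) (proj y).
have := branched_cover_trace f_cover oU cU Uy U1 U2; rewrite -/C.
have fibreC x : finite_set (C `&` f @^-1` [set x]).
  by apply: sub_finite_set (branched_cover_finite_fibre f_cover x) => z [].
have [[c0 Cc0 nc0]|Cnr] := pselect (exists2 c, C c & ~ rel c).
  suff tr x : trace cut_map cut_weight (connected_component (cut_map @^-1` U) y) x =
      trace f w C x by rewrite !tr.
  by rewrite /trace cut_component_full //; [apply: fsbig_cut_weight|exists c0].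
have Cr : C `<=` rel by move=> c Cc; apply: contrapT => nc; apply: Cnr; exists c.
have ry : rel (proj y) by apply/Cr/connected_component_refl.
pose n x := \sum_(z \in C `&` f @^-1` [set x]) 1%N.
have trC x : trace f w C x = w (proj y) * n x.
  rewrite /trace -fsumr_const //; apply: eq_fsbigr => z /set_mem [Cz _].
  exact: (weight_relint_const (Cr _ Cz) ry).
have trC' x : trace cut_map cut_weight (connected_component (cut_map @^-1` U) y) x =
    cut_weight y * n x.
  rewrite /trace cut_component_sheet // cut_lift_image_fibre.
  rewrite fsbig_image; last by move=> ? ? _ _; apply: cut_lift_inj.
  rewrite -fsumr_const //; apply: eq_fsbigr => z /set_mem [Cz _].
  have rz := Cr _ Cz; rewrite -{2}(cut_lift_sheet y); case: (cut_sheet y).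
    by rewrite !cut_weight_lift_true // (weight_relint_const rz ry).
  by rewrite !cut_weight_lift_false !asboolT.
move=> /eqP; rewrite !trC !trC' eqn_pmul2l => [/eqP -> //|].
exact: ltn_trans (weight_relint_gt1 ry).
Qed.

Lemma cut_is_branched_cover : is_branched_cover cut_weight cut_map.
Proof.
split; first exact: cut_connected.
split; first exact: branched_cover_target_connected f_cover.
split; first exact: cut_is_weight.
split; first exact: cut_map_morphism.
split; first exact: cut_map_cone_iso.
exact: cut_map_trace.
Qed.

End CutCover.

Unset Implicit Arguments.

Theorem lemma2p29 (D S : coneComplex) (w : D -> nat) (f : D -> S) :
  is_branched_cover w f -> maximal_cover w f ->
  forall tau : set D, maximal_cone tau -> ~ ramified_along w tau.
Proof.
move=> f_cover f_max tau tau_max tau_ram.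
apply: (cut_cover_not_iso (tau_max := tau_max) f_cover tau_ram); apply: f_max.
- exact: cut_is_branched_cover.
- exact: cut_map_degree.
- exact: cut_cover_ge.
Qed.
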